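(* Let $v\in\mathbb{Z}^d$ be primitive and $p$ a prime. Let $h\in H_v(\mathbb{Q}_p)\cap\mathrm{SO}_d(\mathbb{Z}_p)\mathrm{SO}_d(\mathbb{Z}[1/p])$, and write $h=c_1\gamma_1$ with $c_1\in\mathrm{SO}_d(\mathbb{Z}_p)$, $\gamma_1\in\mathrm{SO}_d(\mathbb{Z}[1/p])$, and $g_v^{-1}hg_v=c_2\gamma_2^{-1}$ with $c_2\in\mathrm{ASL}_{d-1}(\mathbb{Z}_p)$, $\gamma_2\in\mathrm{ASL}_{d-1}(\mathbb{Z}[1/p])$. Then $\gamma_1g_v\gamma_2\in\mathrm{SL}_d(\mathbb{Z})$.
   Context: For primitive $v\in\mathbb{Z}^d$: $\Lambda_v=v^\perp\cap\mathbb{Z}^d$; $H_v\le\mathrm{SO}_d$ is the stabilizer of $v$ (a $\mathbb{Q}$-algebraic group); $g_v\in\mathrm{SL}_d(\mathbb{Z})$ is a matrix whose first $d-1$ columns form a positively oriented $\mathbb{Z}$-basis of $\Lambda_v$. $\mathrm{ASL}_{d-1}=\{\begin{pmatrix}g&*\\0&1\end{pmatrix}:g\in\mathrm{SL}_{d-1}\}\le\mathrm{SL}_d$; one has $g_v^{-1}H_vg_v\le\mathrm{ASL}_{d-1}$ and $\mathrm{ASL}_{d-1}(\mathbb{Q}_p)=\mathrm{ASL}_{d-1}(\mathbb{Z}_p)\mathrm{ASL}_{d-1}(\mathbb{Z}[1/p])$, so such decompositions exist. *)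

From HB Require Import structures.
From mathcomp Require Import all_boot all_order all_algebra.
Set Implicit Arguments. Unset Strict Implicit. Unset Printing Implicit Defensive.
Import Order.TTheory GRing.Theory Num.Theory.
Local Open Scope ring_scope.

Definition padic_val (p : nat) (q : rat) : int :=
  (logn p `|numq q|%N)%:Z - (logn p `|denq q|%N)%:Z.

Definition padic_abs (p : nat) (q : rat) : rat :=
  if q == 0 then 0 else (p%:R : rat) ^ (- padic_val p q).

(* (K, iota, nrm) is a model of Q_p: a field with a non-archimedean absolute
   value, containing Q (via iota) as a dense subfield on which the absolute
   value is the p-adic one, and complete.  These properties characterize Q_p
   up to (isometric) isomorphism. *)
Record is_Qp (p : nat) (K : fieldType) (iota : {rmorphism rat -> K})
    (nrm : K -> rat) : Prop := IsQp {
  Qp_nrm_ge0 : forall x, 0 <= nrm x;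
  Qp_nrm_eq0 : forall x, nrm x = 0 <-> x = 0;
  Qp_nrmM : forall x y, nrm (x * y) = nrm x * nrm y;
  Qp_nrm_ultra : forall x y, nrm (x + y) <= Num.max (nrm x) (nrm y);
  Qp_nrm_rat : forall q, nrm (iota q) = padic_abs p q;
  Qp_dense : forall x e, 0 < e -> exists q, nrm (x - iota q) < e;
  Qp_complete : forall u : nat -> K,
    (forall e, 0 < e -> exists N, forall m n, (N <= m)%N -> (N <= n)%N ->
        nrm (u m - u n) < e) ->
    exists l, forall e, 0 < e -> exists N, forall n, (N <= n)%N -> nrm (u n - l) < e
}.

Definition Zp_elt (K : fieldType) (nrm : K -> rat) (x : K) : Prop := nrm x <= 1.

Definition Zinvp (p : nat) (q : rat) : Prop :=
  exists (k : nat) (z : int), q = z%:~R / (p%:R ^+ k).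

Definition primitive (d : nat) (v : 'cV[int]_d) : Prop :=
  \big[gcdz/0]_(i < d) v i 0 = 1.

Definition in_SO (R : comUnitRingType) (d : nat) (A : 'M[R]_d) : Prop :=
  A^T *m A = 1%:M /\ \det A = 1.

(* ASL_{d-1} inside SL_d: det 1 and last row (0,...,0,1) *)
Definition in_ASL (R : comUnitRingType) (d : nat) (A : 'M[R]_d) : Prop :=
  \det A = 1 /\
  forall i j : 'I_d, nat_of_ord i = d.-1 -> A i j = (nat_of_ord j == d.-1)%:R.

(* g_v: in SL_d(Z), first d-1 columns are a positively oriented Z-basis of
   Lambda_v = v^perp \cap Z^d.  Positive orientation: det(b_1,...,b_{d-1}, v) > 0. *)
Definition is_gv (d : nat) (v : 'cV[int]_d) (g : 'M[int]_d) : Prop :=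
  [/\ \det g = 1,
      (forall j : 'I_d, (j < d.-1)%N -> v^T *m col j g = 0),
      (forall w : 'cV[int]_d, v^T *m w = 0 ->
         exists a : 'I_d -> int,
           w = \sum_(j < d | (j < d.-1)%N) a j *: col j g) &
      0 < \det (\matrix_(i < d, j < d) if (j < d.-1)%N then g i j else v i 0)].

From mathcomp Require Import all_boot all_order all_algebra.
From mathcomp Require Import ring.
Set Implicit Arguments.
Unset Strict Implicit.
Unset Printing Implicit Defensive.

Import Order.TTheory GRing.Theory Num.Theory.
Local Open Scope ring_scope.

(* Put M = gamma1 g_v gamma2 in GL_d(Q).  Its entries lie in Z[1/p], as those of
   all three factors do.  Over Q_p, c1^T = c1^-1 and the two factorizations of h give
   M = c1^T g_v c2, so the entries of M are also p-adic integers.  A rational that is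
   both in Z[1/p] and in Z_p is an integer, and det M = 1. *)

Section IntegersAwayFromP.

Variable p : nat.
Hypothesis p_prime : prime p.

Let pX_neq0 k : (p%:R : rat) ^+ k != 0.
Proof. by rewrite expf_neq0 // pnatr_eq0 -lt0n prime_gt0. Qed.

Lemma Zinvp_int (z : int) : Zinvp p z%:~R.
Proof. by exists 0%N, z; rewrite expr0 divr1. Qed.

Lemma Zinvp_add x y : Zinvp p x -> Zinvp p y -> Zinvp p (x + y).
Proof.
move=> [k1 [z1 ->]] [k2 [z2 ->]].
exists (k1 + k2)%N, (z1 * (p ^ k2)%N%:Z + z2 * (p ^ k1)%N%:Z).
rewrite rmorphD !rmorphM /= exprD -!pmulrn !natrX.
by field; rewrite !pX_neq0.
Qed.

Lemma Zinvp_mul x y : Zinvp p x -> Zinvp p y -> Zinvp p (x * y).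
Proof.
move=> [k1 [z1 ->]] [k2 [z2 ->]].
exists (k1 + k2)%N, (z1 * z2).
by rewrite rmorphM /= exprD; field; rewrite !pX_neq0.
Qed.

Lemma Zinvp_mulmx m n l (A : 'M[rat]_(m, n)) (B : 'M[rat]_(n, l)) :
  (forall i j, Zinvp p (A i j)) -> (forall i j, Zinvp p (B i j)) ->
  forall i j, Zinvp p ((A *m B) i j).
Proof.
move=> ZA ZB i j; rewrite mxE.
apply: (big_ind (Zinvp p)).
- exact: (Zinvp_int 0).
- exact: Zinvp_add.
- by move=> k _; apply: Zinvp_mul.
Qed.

Lemma Zinvp_denq_pfactor q : Zinvp p q -> exists m, `|denq q|%N = (p ^ m)%N.
Proof.
move=> [k [z qE]].
have cross : numq q * (p ^ k)%N%:Z = z * denq q.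
  apply: (@intr_inj rat).
  by rewrite !rmorphM /= numqE qE -pmulrn natrX; field; rewrite pX_neq0.
have : (`|denq q| %| p ^ k)%N.
  rewrite -(@Gauss_dvdr _ `|numq q|) 1?coprime_sym ?coprime_num_den //.
  by rewrite -[(p ^ k)%N]/`|(p ^ k)%N%:Z|%N -abszM cross abszM dvdn_mull.
by case/(dvdn_pfactor _ _ p_prime) => m _ ->; exists m.
Qed.

Lemma padic_abs_gt1 q m : `|denq q|%N = (p ^ m.+1)%N -> 1 < padic_abs p q.
Proof.
move=> dq; have q_neq0 : q != 0.
  apply: contra_eqN dq => /eqP->.
  by rewrite /= -[X in X == _](expn0 p) eqn_exp2l ?prime_gt1.
have p_numq : coprime p `|numq q|.
  rewrite coprime_sym (coprime_dvdr _ (coprime_num_den q)) // dq.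
  by rewrite expnS dvdn_mulr.
rewrite /padic_abs (negPf q_neq0) /padic_val dq pfactorK // logn_coprime //.
by rewrite sub0r opprK exprn_egt1 // ltr1n prime_gt1.
Qed.

Lemma Zinvp_padic_integral q : Zinvp p q -> padic_abs p q <= 1 -> denq q = 1.
Proof.
case/Zinvp_denq_pfactor => [[|m]] dq; last by rewrite leNgt (padic_abs_gt1 dq).
by move=> _; rewrite -[denq q]gez0_abs ?denq_ge0 // dq.
Qed.

Lemma padic_abs_int_le1 (z : int) : padic_abs p z%:~R <= 1.
Proof.
rewrite /padic_abs; case: ifP => // _.
rewrite /padic_val numq_int denq_int logn1 subr0 -exprnN invf_le1.
  by rewrite exprn_ege1 // ler1n prime_gt0.
by rewrite exprn_gt0 // ltr0n prime_gt0.
Qed.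

End IntegersAwayFromP.

Section PadicIntegers.

Variables (p : nat) (K : fieldType) (iota : {rmorphism rat -> K}) (nrm : K -> rat).
Hypotheses (p_prime : prime p) (Qp : is_Qp p iota nrm).

Lemma Zp_elt_int (z : int) : Zp_elt nrm (iota z%:~R).
Proof. by rewrite /Zp_elt (Qp_nrm_rat Qp) padic_abs_int_le1. Qed.

Lemma Zp_elt_mulmx m n l (A : 'M[K]_(m, n)) (B : 'M[K]_(n, l)) :
  (forall i j, Zp_elt nrm (A i j)) -> (forall i j, Zp_elt nrm (B i j)) ->
  forall i j, Zp_elt nrm ((A *m B) i j).
Proof.
move=> ZA ZB i j; rewrite mxE.
apply: (big_ind (Zp_elt nrm)).
- by rewrite /Zp_elt (proj2 (Qp_nrm_eq0 Qp 0)).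
- move=> x y Zx Zy; apply: le_trans (Qp_nrm_ultra Qp x y) _.
  by rewrite ge_max Zx Zy.
- by move=> k _; rewrite /Zp_elt (Qp_nrmM Qp) mulr_ile1 ?(Qp_nrm_ge0 Qp) ?ZA ?ZB.
Qed.

Lemma Zinvp_Zp_elt_integral q : Zinvp p q -> Zp_elt nrm (iota q) -> denq q = 1.
Proof. by move=> Zq; rewrite /Zp_elt (Qp_nrm_rat Qp); apply: Zinvp_padic_integral. Qed.

End PadicIntegers.

Lemma mulmx_factor_swap (R : comUnitRingType) n (c1 g1 G c2 g2 : 'M[R]_n) :
  c1^T *m c1 = 1%:M -> G \in unitmx -> g2 \in unitmx ->
  invmx G *m (c1 *m g1) *m G = c2 *m invmx g2 ->
  g1 *m G *m g2 = c1^T *m G *m c2.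
Proof.
move=> c1_orth G_unit g2_unit conjE.
have {}conjE : c1 *m g1 *m G *m g2 = G *m c2.
  move/(congr1 (fun A => G *m A *m g2)): conjE.
  by rewrite !mulmxA mulmxV // mul1mx -!mulmxA mulVmx // mulmx1.
by rewrite -!mulmxA -conjE !mulmxA c1_orth mul1mx.
Qed.

Lemma map_mx_intr_numq m n (A : 'M[rat]_(m, n)) :
  (forall i j, denq (A i j) = 1) -> map_mx intr (\matrix_(i, j) numq (A i j)) = A.
Proof. by move=> A_int; apply/matrixP => i j; rewrite !mxE numqE A_int mulr1. Qed.

Theorem lemma3p2 (d : nat) (v : 'cV[int]_d) (p : nat)
    (K : fieldType) (iota : {rmorphism rat -> K}) (nrm : K -> rat)
    (g_v : 'M[int]_d) (h c1 c2 : 'M[K]_d) (gamma1 gamma2 : 'M[rat]_d) :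
  primitive v -> prime p -> is_Qp p iota nrm -> is_gv v g_v ->
  (* h in H_v(Q_p) *)
  in_SO h -> h *m map_mx (fun z : int => iota z%:~R) v = map_mx (fun z : int => iota z%:~R) v ->
  (* h = c1 gamma1, c1 in SO_d(Z_p), gamma1 in SO_d(Z[1/p]) *)
  in_SO c1 -> (forall i j, Zp_elt nrm (c1 i j)) ->
  in_SO gamma1 -> (forall i j, Zinvp p (gamma1 i j)) ->
  h = c1 *m map_mx iota gamma1 ->
  (* g_v^{-1} h g_v = c2 gamma2^{-1}, c2 in ASL_{d-1}(Z_p), gamma2 in ASL_{d-1}(Z[1/p]) *)
  in_ASL c2 -> (forall i j, Zp_elt nrm (c2 i j)) ->
  in_ASL gamma2 -> (forall i j, Zinvp p (gamma2 i j)) ->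
  invmx (map_mx (fun z : int => iota z%:~R) g_v) *m h *m
      map_mx (fun z : int => iota z%:~R) g_v
    = c2 *m invmx (map_mx iota gamma2) ->
  (* conclusion: gamma1 g_v gamma2 in SL_d(Z) *)
  exists M : 'M[int]_d, \det M = 1 /\
    map_mx (fun z : int => z%:~R) M = gamma1 *m map_mx (fun z : int => z%:~R) g_v *m gamma2.
Proof.
move=> _ p_prime Qp [det_g _ _ _] _ _ [c1_orth _] Zp_c1 [_ det_g1] Zinvp_g1 hE
  _ Zp_c2 [det_g2 _] Zinvp_g2 conjE.
set g : 'M[rat]_d := map_mx intr g_v.
set M := gamma1 *m g *m gamma2.
have gE : map_mx (fun z : int => iota z%:~R) g_v = map_mx iota g.
  by apply/matrixP => i j; rewrite !mxE.
have ME : map_mx iota M = c1^T *m map_mx iota g *m c2.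
  rewrite !map_mxM; apply: mulmx_factor_swap; rewrite -?hE -?gE //.
    by rewrite unitmxE gE det_map_mx det_map_mx det_g !rmorph1 unitr1.
  by rewrite unitmxE det_map_mx det_g2 rmorph1 unitr1.
have M_int i j : denq (M i j) = 1.
  apply: (Zinvp_Zp_elt_integral p_prime Qp).
    by do 2![apply: Zinvp_mulmx => // ? ?]; rewrite mxE; apply: Zinvp_int.
  have -> : iota (M i j) = map_mx iota M i j by rewrite [RHS]mxE.
  rewrite ME.
  do 2![apply: (Zp_elt_mulmx Qp) => // ? ?]; rewrite !mxE //.
  exact: Zp_elt_int p_prime Qp _.
exists (\matrix_(i, j) numq (M i j)); rewrite map_mx_intr_numq //; split=> //.
apply: (@intr_inj rat).
rewrite -(det_map_mx (intr : {rmorphism int -> rat})) map_mx_intr_numq //.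
by rewrite /M !det_mulmx det_g1 det_g2 det_map_mx det_g !rmorph1 !mulr1.
Qed.
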